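(* Let $(U,\tau_R,\rho)$ be a general ordered topological approximation space and $A\subseteq U$. If $A$ is $R$-increasing exact, i.e. $\underline{R}_{Inc}(A)=\overline{R}^{Inc}(A)$, then $A$ is $P$-increasing exact, i.e. $\underline{P}_{Inc}(A)=\overline{P}^{Inc}(A)$. Likewise, if $\underline{R}_{Dec}(A)=\overline{R}^{Dec}(A)$, then $\underline{P}_{Dec}(A)=\overline{P}^{Dec}(A)$.
   Context: A general ordered topological approximation space (GOTAS) is a triple $(U,\tau_R,\rho)$ where $U$ is a non-empty set, $R$ is a binary relation on $U$, $\tau_R$ is a topology on $U$ generated by $R$, and $\rho$ is a partial order on $U$. A subset $A\subseteq U$ is increasing (resp. decreasing) if whenever $a\in A$, $x\in U$ and $a\,\rho\,x$ (resp. $x\,\rho\,a$), then $x\in A$. For $A\subseteq U$: $\underline{R}_{Inc}(A)$ is the greatest subset of $A$ that is both $\tau_R$-open and increasing; $\underline{R}_{Dec}(A)$ is the greatest subset of $A$ that is $\tau_R$-open and decreasing; $\overline{R}^{Inc}(A)$ is the smallest superset of $A$ that is $\tau_R$-closed and increasing; $\overline{R}^{Dec}(A)$ is the smallest superset of $A$ that is $\tau_R$-closed and decreasing. Define $\underline{P}_{Inc}(A)=A\cap\underline{R}_{Inc}(\overline{R}^{Inc}(A))$, $\overline{P}^{Inc}(A)=A\cup\overline{R}^{Inc}(\underline{R}_{Inc}(A))$, $\underline{P}_{Dec}(A)=A\cap\underline{R}_{Dec}(\overline{R}^{Dec}(A))$, $\overline{P}^{Dec}(A)=A\cup\overline{R}^{Dec}(\underline{R}_{Dec}(A))$.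 *)

From Stdlib Require Import Classical.
Set Implicit Arguments.

Section Defs.
Variable U : Type.

Definition subset (A B : U -> Prop) : Prop := forall x, A x -> B x.

Definition aftset (R : U -> U -> Prop) (x : U) : U -> Prop := fun y => R x y.

(* tau_R: the topology generated by the subbase { xR | x in U }, i.e. the
   smallest family containing the after-sets and closed under finite
   intersections (including the empty one, U) and arbitrary unions. *)
Inductive tauR_open (R : U -> U -> Prop) : (U -> Prop) -> Prop :=
| tauR_sub : forall x, tauR_open R (aftset R x)
| tauR_full : tauR_open R (fun _ => True)
| tauR_inter : forall A B, tauR_open R A -> tauR_open R B ->
    tauR_open R (fun y => A y /\ B y)
| tauR_union : forall (F : (U -> Prop) -> Prop),
    (forall A, F A -> tauR_open R A) ->
    tauR_open R (fun y => exists A, F A /\ A y)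
| tauR_ext : forall A B, tauR_open R A -> (forall y, A y <-> B y) ->
    tauR_open R B.

Definition tauR_closed (R : U -> U -> Prop) (A : U -> Prop) : Prop :=
  tauR_open R (fun y => ~ A y).

Definition partial_order (rho : U -> U -> Prop) : Prop :=
  (forall x, rho x x) /\
  (forall x y, rho x y -> rho y x -> x = y) /\
  (forall x y z, rho x y -> rho y z -> rho x z).

Definition increasing (rho : U -> U -> Prop) (A : U -> Prop) : Prop :=
  forall a x, A a -> rho a x -> A x.
Definition decreasing (rho : U -> U -> Prop) (A : U -> Prop) : Prop :=
  forall a x, A a -> rho x a -> A x.

Definition RlowInc R rho (A : U -> Prop) : U -> Prop :=
  fun x => exists G, tauR_open R G /\ increasing rho G /\ subset G A /\ G x.
Definition RlowDec R rho (A : U -> Prop) : U -> Prop :=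
  fun x => exists G, tauR_open R G /\ decreasing rho G /\ subset G A /\ G x.
Definition RupInc R rho (A : U -> Prop) : U -> Prop :=
  fun x => forall F, tauR_closed R F -> increasing rho F -> subset A F -> F x.
Definition RupDec R rho (A : U -> Prop) : U -> Prop :=
  fun x => forall F, tauR_closed R F -> decreasing rho F -> subset A F -> F x.

Definition PlowInc R rho A : U -> Prop :=
  fun x => A x /\ RlowInc R rho (RupInc R rho A) x.
Definition PupInc R rho A : U -> Prop :=
  fun x => A x \/ RupInc R rho (RlowInc R rho A) x.
Definition PlowDec R rho A : U -> Prop :=
  fun x => A x /\ RlowDec R rho (RupDec R rho A) x.
Definition PupDec R rho A : U -> Prop :=
  fun x => A x \/ RupDec R rho (RlowDec R rho A) x.

Definition set_eq (A B : U -> Prop) : Prop := forall x, A x <-> B x.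
End Defs.

(* Only two facts about the lower and upper approximations are used: the lower
   one lies below A and the upper one above it, and both are monotone.  If they
   agree, they both equal A, so A is a fixed point of each, and both
   P-approximations collapse to A.  Neither the order axioms nor the specific
   monotonicity class (increasing or decreasing) play any role. *)

Section Approximations.
Variable U : Type.
Variable R : U -> U -> Prop.
Variable M : (U -> Prop) -> Prop.

Definition open_kernel (A : U -> Prop) : U -> Prop :=
  fun x => exists G, tauR_open R G /\ M G /\ subset G A /\ G x.

Definition closed_hull (A : U -> Prop) : U -> Prop :=
  fun x => forall F, tauR_closed R F -> M F -> subset A F -> F x.

Lemma open_kernel_sub (A : U -> Prop) : subset (open_kernel A) A.
Proof. intros x [G [_ [_ [HGA Gx]]]]. exact (HGA x Gx). Qed.

Lemma sub_closed_hull (A : U -> Prop) : subset A (closed_hull A).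
Proof. intros x Ax F _ _ HAF. exact (HAF x Ax). Qed.

Lemma open_kernel_mono (A B : U -> Prop) :
  subset A B -> subset (open_kernel A) (open_kernel B).
Proof.
  intros HAB x [G [HG [MG [HGA Gx]]]].
  exists G. repeat split; auto.
  intros y Gy. exact (HAB y (HGA y Gy)).
Qed.

Lemma closed_hull_mono (A B : U -> Prop) :
  subset A B -> subset (closed_hull A) (closed_hull B).
Proof.
  intros HAB x Hx F HF MF HBF.
  apply Hx; auto.
  intros y Ay. exact (HBF y (HAB y Ay)).
Qed.

Section Exact.
Variable A : U -> Prop.
Hypothesis R_exact : set_eq (open_kernel A) (closed_hull A).

Lemma exact_open_kernel : set_eq (open_kernel A) A.
Proof.
  intros x; split.
  - apply open_kernel_sub.
  - intros Ax. apply R_exact, sub_closed_hull, Ax.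
Qed.

Lemma exact_closed_hull : set_eq (closed_hull A) A.
Proof.
  intros x; split.
  - intros Hx. apply R_exact in Hx. exact (open_kernel_sub A x Hx).
  - apply sub_closed_hull.
Qed.

Lemma exact_lower_P : set_eq (fun x => A x /\ open_kernel (closed_hull A) x) A.
Proof.
  intros x; split.
  - intros [Ax _]. exact Ax.
  - intros Ax. split; [exact Ax|].
    apply (open_kernel_mono _ _ (fun y Ay => proj2 (exact_closed_hull y) Ay)).
    apply exact_open_kernel, Ax.
Qed.

Lemma exact_upper_P : set_eq (fun x => A x \/ closed_hull (open_kernel A) x) A.
Proof.
  intros x; split.
  - intros [Ax | Hx]; [exact Ax|].
    apply (proj1 (exact_closed_hull x)).
    exact (closed_hull_mono _ _ (fun y Hy => proj1 (exact_open_kernel y) Hy) x Hx).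
  - intros Ax. left. exact Ax.
Qed.

Lemma P_exact_of_R_exact :
  set_eq (fun x => A x /\ open_kernel (closed_hull A) x)
         (fun x => A x \/ closed_hull (open_kernel A) x).
Proof.
  intros x; split; intros Hx.
  - apply (proj2 (exact_upper_P x)), (proj1 (exact_lower_P x)), Hx.
  - apply (proj2 (exact_lower_P x)), (proj1 (exact_upper_P x)), Hx.
Qed.

End Exact.
End Approximations.

Theorem proposition3p10 (U : Type) (R rho : U -> U -> Prop) (A : U -> Prop) (u0 : U) :
  partial_order rho ->
  (set_eq (RlowInc R rho A) (RupInc R rho A) ->
     set_eq (PlowInc R rho A) (PupInc R rho A)) /\
  (set_eq (RlowDec R rho A) (RupDec R rho A) ->
     set_eq (PlowDec R rho A) (PupDec R rho A)).
Proof.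
  intros _. split.
  - exact (@P_exact_of_R_exact U R (increasing rho) A).
  - exact (@P_exact_of_R_exact U R (decreasing rho) A).
Qed.
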